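(* Let $\mathcal G=(\mathcal V,\mathcal E)$ be a connected undirected graph on $N\ge 2$ nodes, let $a(0)\in\mathbb R^N$ be arbitrary, let $p\in[0,1]$, and let $(a(l))_{l\ge 0}$ be generated by the sample greedy gossip (SGG) iteration with node activation probability $p$. Then $$\lim_{l\to\infty}\mathbb E\big[\|a(l)-\bar a\|^2\big]=0,$$ i.e. SGG converges (in mean square) to the average state $\bar a$.
   Context: Graph: $\mathcal V=\{1,\dots,N\}$, and $\mathcal N_s=\{t\in\mathcal V: (s,t)\in\mathcal E,\ t\neq s\}$ is the neighbour set of node $s$ (nonempty for all $s$ by connectivity). Each node $s$ holds a scalar $a_s(l)$; $a(l)=(a_1(l),\dots,a_N(l))^T$. $\bar a\in\mathbb R^N$ is the vector all of whose entries equal $\frac1N\sum_{s=1}^N a_s(0)$. $\|\cdot\|$ is the Euclidean norm. SGG iteration (step $l\ge1$, all random choices independent across steps and of the past): a node $s$ is chosen uniformly at random from $\mathcal V$; each $t\in\mathcal N_s$ independently joins an active set $\mathcal A_s\subseteq\mathcal N_s$ with probability $p$. If $\mathcal A_s\neq\emptyset$, let $t^*$ be a maximiser of $(a_s(l-1)-a_t(l-1))^2$ over $t\in\mathcal A_s$ (ties broken arbitrarily); if $\mathcal A_s=\emptyset$, let $t^*$ be chosen uniformly at random from $\mathcal N_s$. Then $a_s(l)=a_{t^*}(l)=\tfrac12\big(a_s(l-1)+a_{t^*}(l-1)\big)$, and $a_u(l)=a_u(l-1)$ for all $u\notin\{s,t^*\}$. *)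

From HB Require Import structures.
From mathcomp Require Import all_boot all_order all_algebra.
Set Implicit Arguments. Unset Strict Implicit. Unset Printing Implicit Defensive.
Import Order.TTheory GRing.Theory Num.Theory.
Local Open Scope ring_scope.

Section SGG.
Variables (R : archiRealFieldType) (T : finType) (e : rel T).

Definition nbrs (s : T) : {set T} := [set t | e s t].

Definition avg_update (a : T -> R) (s t : T) : T -> R :=
  fun u => if (u == s) || (u == t) then (a s + a t) / 2%:R else a u.

(* probability that the active set equals A (A a subset of N_s) *)
Definition act_weight (p : R) (s : T) (A : {set T}) : R :=
  p ^+ #|A| * (1 - p) ^+ (#|nbrs s| - #|A|).

Definition greedy_choice (choose : (T -> R) -> T -> {set T} -> T) : Prop :=
  forall (a : T -> R) (s : T) (A : {set T}), A != set0 -> A \subset nbrs s ->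
    choose a s A \in A /\
    (forall t, t \in A -> (a s - a t) ^+ 2 <= (a s - a (choose a s A)) ^+ 2).

(* one SGG step: expectation of f(a(l)) given a(l-1) = a *)
Definition sgg_step (p : R) (choose : (T -> R) -> T -> {set T} -> T)
  (f : (T -> R) -> R) (a : T -> R) : R :=
  (#|T|%:R)^-1 * \sum_(s : T) \sum_(A in powerset (nbrs s))
     act_weight p s A *
     (if A == set0 then
        (#|nbrs s|%:R)^-1 * \sum_(t in nbrs s) f (avg_update a s t)
      else f (avg_update a s (choose a s A))).

(* sgg_exp tb k n f a = E[ f(a(k+n)) | a(k) = a ], where step l uses the
   tie-breaking rule tb l *)
Fixpoint sgg_exp (p : R) (tb : nat -> (T -> R) -> T -> {set T} -> T)
  (k n : nat) (f : (T -> R) -> R) (a : T -> R) : R :=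
  match n with
  | 0 => f a
  | n'.+1 => sgg_step p (tb k.+1) (sgg_exp p tb k.+1 n' f) a
  end.

Definition avg (a : T -> R) : R := (#|T|%:R)^-1 * \sum_(u : T) a u.

Definition sqdist_to (c : R) (a : T -> R) : R := \sum_(u : T) (a u - c) ^+ 2.

End SGG.

(* Write V_c(a) = sum_u (a_u - c)^2 and let D(a) = sum_s sum_{t ~ s} (a_s - a_t)^2
   be the Dirichlet energy of the graph.  The proof is a Lyapunov argument:
   1. one averaging step along an edge {s,t} preserves the average and lowers
      V_c by exactly (a_s - a_t)^2 / 2;
   2. given the woken node s, either no neighbour or every neighbour is active
      with probability (1-p)^d + p^d >= 2^-N; in both cases the chosen edge has
      squared difference at least the mean over the neighbours of s, so one SGG
      step lowers E[V_c] by at least a constant multiple of D(a);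
   3. a Poincare inequality along shortest paths of the connected graph bounds
      V_avg(a) by a constant multiple of D(a);
   4. hence E[V] contracts by a fixed factor 1 - g < 1 at every step, whatever
      the tie-breaking rule, and (1 - g)^l -> 0 by Bernoulli's inequality. *)
From HB Require Import structures.
From mathcomp Require Import all_boot all_order all_algebra.
From mathcomp Require Import ring lra.
Import Order.TTheory GRing.Theory Num.Theory.
Local Open Scope ring_scope.
Set Implicit Arguments. Unset Strict Implicit. Unset Printing Implicit Defensive.

Section PairwiseAveraging.
Variables (R : archiRealFieldType) (T : finType).

Lemma sum_split2 (F : T -> R) s t : s != t ->
  \sum_u F u = F s + F t + \sum_(u | (u != s) && (u != t)) F u.
Proof.
move=> st; rewrite (bigD1 s) //= (bigD1 t) /=; last by rewrite eq_sym.
by rewrite addrA.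
Qed.

Lemma sum_avg_update (a : T -> R) s t :
  \sum_u avg_update a s t u = \sum_u a u.
Proof.
have h2 : (2%:R : R) != 0 by rewrite pnatr_eq0.
have [<- | st] := eqVneq s t.
  apply: eq_bigr => u _; rewrite /avg_update orbb.
  by case: eqP => [->|//]; field.
rewrite (sum_split2 _ st) (sum_split2 a st) /avg_update !eqxx orbT /=.
congr (_ + _); first by field.
by apply: eq_bigr => u /andP[/negbTE-> /negbTE->].
Qed.

Lemma avg_avg_update (a : T -> R) s t : avg (avg_update a s t) = avg a.
Proof. by rewrite /avg sum_avg_update. Qed.

Lemma sqdist_avg_update (c : R) (a : T -> R) s t :
  sqdist_to c (avg_update a s t) = sqdist_to c a - (a s - a t) ^+ 2 / 2%:R.
Proof.
have h2 : (2%:R : R) != 0 by rewrite pnatr_eq0.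
have [<- | st] := eqVneq s t.
  rewrite subrr expr0n /= mul0r subr0; apply: eq_bigr => u _.
  by rewrite /avg_update orbb; case: eqP => [->|//]; congr (_ ^+ _); field.
rewrite /sqdist_to (sum_split2 _ st) (sum_split2 (fun u => (a u - c) ^+ 2) st).
rewrite /avg_update !eqxx orbT /=.
rewrite (eq_bigr (fun u => (a u - c) ^+ 2)); last first.
  by move=> u /andP[/negbTE-> /negbTE->].
by field.
Qed.

Lemma sqdist_to_ge0 (c : R) (a : T -> R) : 0 <= sqdist_to c a.
Proof. by rewrite sumr_ge0 // => u _; exact: sqr_ge0. Qed.

Lemma sqdist_avg_min (a : T -> R) (x : R) : (0 < #|T|)%N ->
  sqdist_to (avg a) a <= sqdist_to x a.
Proof.
move=> hT; set c := avg a.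
have n0 : (#|T|%:R : R) != 0 by rewrite pnatr_eq0 -lt0n.
have hs : \sum_u a u = c * #|T|%:R by rewrite /c /avg; field.
have cst (k : R) : \sum_(u : T) k = k * #|T|%:R.
  by rewrite sumr_const mulr_natr; congr (_ *+ _); apply: eq_card.
rewrite -subr_ge0 /sqdist_to -sumrB.
have -> : \sum_u ((a u - x) ^+ 2 - (a u - c) ^+ 2) = (c - x) ^+ 2 * #|T|%:R.
  transitivity (\sum_u (2%:R * (c - x) * a u) - \sum_(u : T) (c ^+ 2 - x ^+ 2)).
    by rewrite -sumrB; apply: eq_bigr => u _; ring.
  by rewrite -mulr_sumr hs cst; ring.
by rewrite mulr_ge0 ?sqr_ge0 ?ler0n.
Qed.

End PairwiseAveraging.

Section BernoulliWeights.
Variable R : archiRealFieldType.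

(* The laws of independent Bernoulli(p) membership for the elements of S sum
   to one: this is the binomial expansion of prod_{i in S} (p + (1 - p)). *)
Lemma bernoulli_weights_sum (T : finType) (p : R) (S : {set T}) :
  \sum_(A in powerset S) p ^+ #|A| * (1 - p) ^+ (#|S| - #|A|) = 1.
Proof.
pose F i := if i \in S then p else 0.
pose G i := if i \in S then 1 - p else 1.
have one : \prod_i (F i + G i) = 1.
  apply: big1 => i _; rewrite /F /G.
  by case: (i \in S); rewrite ?add0r // addrC subrK.
rewrite -[RHS]one bigA_distr [RHS](bigID (fun J : {set T} => J \subset S)) /=.
rewrite [X in _ = _ + X]big1 ?addr0; last first.
  move=> J /subsetPn [i iJ iS].
  by rewrite (bigD1 i) //= iJ /F (negbTE iS) mul0r.
apply: eq_big => [J|J JS]; first by rewrite powersetE.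
rewrite powersetE in JS.
rewrite (bigID [in J]) /= (eq_bigr (fun _ => p)); last first.
  by move=> i iJ; rewrite iJ /F (subsetP JS i iJ).
rewrite prodr_const (bigID [in S]) /= [X in _ = _ * (_ * X)]big1 ?mulr1; last first.
  by move=> i /andP[iJ iS]; rewrite (negbTE iJ) /G (negbTE iS).
rewrite (eq_bigr (fun _ => 1 - p)); last first.
  by move=> i /andP[iJ iS]; rewrite (negbTE iJ) /G iS.
rewrite (eq_bigl (fun i => i \in S :\: J)); last by move=> i; rewrite in_setD.
by rewrite prodr_const cardsD (setIidPr JS).
Qed.

(* With d <= N independent coins, "all tails" or "all heads" has probability
   at least 2^-N, since max(p, 1 - p) >= 1/2. *)
Lemma extreme_outcomes_lb (p : R) (d N : nat) : 0 <= p -> p <= 1 ->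
  (d <= N)%N -> (2%:R ^+ N)^-1 <= (1 - p) ^+ d + p ^+ d.
Proof.
move=> h0 h1 dN.
have h20 : (0 : R) <= 2%:R^-1 by rewrite invr_ge0 ler0n.
have h21 : (2%:R : R)^-1 <= 1 by rewrite invf_le1 ?ltr0n ?ler1n.
have half_pow (x : R) : 2%:R^-1 <= x -> (2%:R ^+ N)^-1 <= x ^+ d.
  move=> hx; rewrite -exprVn; apply: le_trans (ler_wiXn2l h20 h21 dN) _.
  by apply: lerXn2r; rewrite ?nnegrE //; apply: le_trans hx.
have [hp | hp] := lerP (2%:R^-1) p.
  by apply: le_trans (half_pow p hp) _; rewrite lerDr exprn_ge0 // subr_ge0.
apply: le_trans (half_pow (1 - p) _) _; last by rewrite lerDl exprn_ge0.
have : (2%:R : R)^-1 + 2%:R^-1 = 1 by field.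
lra.
Qed.

End BernoulliWeights.

Section StepOperator.
Variables (R : archiRealFieldType) (T : finType) (e : rel T) (p : R).
Variable choose : (T -> R) -> T -> {set T} -> T.
Hypotheses (hp0 : 0 <= p) (hp1 : p <= 1).

Lemma act_weight_ge0 s A : 0 <= act_weight e p s A.
Proof. by rewrite /act_weight mulr_ge0 // exprn_ge0 // subr_ge0. Qed.

Lemma act_weight_sum s : \sum_(A in powerset (nbrs e s)) act_weight e p s A = 1.
Proof. exact: bernoulli_weights_sum. Qed.

Lemma sgg_stepZ (k : R) (f : (T -> R) -> R) a :
  sgg_step e p choose (fun x => k * f x) a = k * sgg_step e p choose f a.
Proof.
rewrite /sgg_step mulrCA; congr (_ * _).
rewrite [RHS]mulr_sumr; apply: eq_bigr => s _.
rewrite [RHS]mulr_sumr; apply: eq_bigr => A _; rewrite mulrCA; congr (_ * _).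
by case: ifP => _ //; rewrite mulrCA [in RHS]mulr_sumr.
Qed.

Lemma sgg_step_mono (f g : (T -> R) -> R) a :
  (forall s t, f (avg_update a s t) <= g (avg_update a s t)) ->
  sgg_step e p choose f a <= sgg_step e p choose g a.
Proof.
move=> fg; rewrite /sgg_step ler_wpM2l ?invr_ge0 ?ler0n //.
apply: ler_sum => s _; apply: ler_sum => A _.
rewrite ler_wpM2l ?act_weight_ge0 //; case: ifP => _ //.
by rewrite ler_wpM2l ?invr_ge0 ?ler0n //; apply: ler_sum.
Qed.

Lemma sgg_step_ge0 (f : (T -> R) -> R) a :
  (forall s t, 0 <= f (avg_update a s t)) -> 0 <= sgg_step e p choose f a.
Proof.
move=> f0; have := @sgg_step_mono (fun x => 0 * f x) f a.
by rewrite sgg_stepZ mul0r; apply=> s t; rewrite mul0r.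
Qed.

End StepOperator.

Section ExpectedDecrease.
Variables (R : archiRealFieldType) (T : finType) (e : rel T) (p : R).
Variable choose : (T -> R) -> T -> {set T} -> T.
Hypotheses (hp0 : 0 <= p) (hp1 : p <= 1) (hchoose : greedy_choice e choose).
Hypothesis deg_gt0 : forall s, (0 < #|nbrs e s|)%N.
Hypothesis T_nonempty : (0 < #|T|)%N.

Local Notation n := (#|T|%:R : R).

Definition dirichlet (a : T -> R) : R :=
  \sum_s \sum_(t in nbrs e s) (a s - a t) ^+ 2.

Lemma dirichlet_ge0 a : 0 <= dirichlet a.
Proof. by rewrite sumr_ge0 // => s _; rewrite sumr_ge0 // => t _; exact: sqr_ge0. Qed.

Definition chosen_gap (a : T -> R) (s : T) (A : {set T}) : R :=
  if A == set0 then (#|nbrs e s|%:R)^-1 * \sum_(t in nbrs e s) (a s - a t) ^+ 2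
  else (a s - a (choose a s A)) ^+ 2.

Definition node_gain (a : T -> R) (s : T) : R :=
  \sum_(A in powerset (nbrs e s)) act_weight e p s A * chosen_gap a s A.

Lemma sgg_step_sqdist (c : R) a :
  sgg_step e p choose (sqdist_to c) a =
  sqdist_to c a - n^-1 * (\sum_s node_gain a s) / 2%:R.
Proof.
have n0 : n != 0 by rewrite pnatr_eq0 -lt0n.
have node s : \sum_(A in powerset (nbrs e s)) act_weight e p s A *
     (if A == set0 then (#|nbrs e s|%:R)^-1 *
        \sum_(t in nbrs e s) sqdist_to c (avg_update a s t)
      else sqdist_to c (avg_update a s (choose a s A)))
  = sqdist_to c a - node_gain a s / 2%:R.
  have d0 : (#|nbrs e s|%:R : R) != 0 by rewrite pnatr_eq0 -lt0n deg_gt0.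
  transitivity (\sum_(A in powerset (nbrs e s))
    (act_weight e p s A * sqdist_to c a -
     act_weight e p s A * chosen_gap a s A / 2%:R)); last first.
    by rewrite sumrB -!mulr_suml act_weight_sum mul1r.
  apply: eq_bigr => A _; rewrite /chosen_gap.
  case: ifP => _; last by rewrite sqdist_avg_update; ring.
  under eq_bigr do rewrite sqdist_avg_update.
  by rewrite sumrB sumr_const -mulr_suml -mulr_natr; field.
have cst : \sum_(s : T) sqdist_to c a = sqdist_to c a * n.
  by rewrite sumr_const mulr_natr; congr (_ *+ _); apply: eq_card.
by rewrite /sgg_step (eq_bigr _ (fun s _ => node s)) sumrB cst -mulr_suml; field.
Qed.

(* The key local estimate: whether no neighbour or all neighbours are active
   (probability >= 2^-N), the averaged edge has squared gap at least the mean
   over the neighbours of s, which is at least 1/N times their sum. *)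
Lemma node_gain_lb a s :
  (n^-1 * (2%:R ^+ #|T|)^-1) * \sum_(t in nbrs e s) (a s - a t) ^+ 2 <=
  node_gain a s.
Proof.
set S := nbrs e s; set d := #|S|; set M := \sum_(t in S) (a s - a t) ^+ 2.
have S0 : S != set0 by rewrite -card_gt0 deg_gt0.
have d0 : (0 : R) < d%:R by rewrite ltr0n deg_gt0.
have M0 : 0 <= M by rewrite sumr_ge0 // => t _; exact: sqr_ge0.
have gap0 A : 0 <= chosen_gap a s A.
  rewrite /chosen_gap; case: ifP => _; last exact: sqr_ge0.
  by rewrite mulr_ge0 ?invr_ge0 ?ler0n.
have [_ chS_max] := hchoose a S0 (subxx S).
have greedy_ge_mean : d%:R^-1 * M <= (a s - a (choose a s S)) ^+ 2.
  by rewrite ler_pdivrMl // mulr_natl -sumr_const; apply: ler_sum => t /chS_max.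
have two_terms : act_weight e p s set0 * chosen_gap a s set0 +
                 act_weight e p s S * chosen_gap a s S <= node_gain a s.
  rewrite /node_gain (bigD1 set0) /=; last by rewrite powersetE sub0set.
  rewrite (bigD1 S) /=; last by rewrite powersetE subxx S0.
  by rewrite addrA lerDl sumr_ge0 // => A _; rewrite mulr_ge0 ?act_weight_ge0.
apply: le_trans two_terms.
rewrite /chosen_gap eqxx (negbTE S0) /act_weight cards0 subn0 subnn !expr0.
rewrite mul1r mulr1 -/S -/d -/M.
have all_or_none : (2%:R ^+ #|T|)^-1 <= (1 - p) ^+ d + p ^+ d.
  by apply: extreme_outcomes_lb => //; exact: max_card.
have inv_card_le : n^-1 <= d%:R^-1.
  by rewrite lef_pV2 ?posrE ?ltr0n ?deg_gt0 // ler_nat max_card.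
apply: le_trans (_ : _ <= ((1 - p) ^+ d + p ^+ d) * (d%:R^-1 * M)) _.
  rewrite [n^-1 * _]mulrC -mulrA; apply: ler_pM => //.
  - by rewrite invr_ge0 exprn_ge0.
  - by rewrite mulr_ge0 // invr_ge0 ler0n.
  - exact: ler_wpM2r.
by rewrite mulrDl lerD2l ler_wpM2l ?exprn_ge0.
Qed.

Definition gain_const : R := n^-1 * (n^-1 * (2%:R ^+ #|T|)^-1) / 2%:R.

Lemma sgg_step_decrease (c : R) a :
  sgg_step e p choose (sqdist_to c) a <= sqdist_to c a - gain_const * dirichlet a.
Proof.
have local_sum : (n^-1 * (2%:R ^+ #|T|)^-1) * dirichlet a <= \sum_s node_gain a s.
  by rewrite /dirichlet mulr_sumr; apply: ler_sum => s _; exact: node_gain_lb.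
rewrite sgg_step_sqdist lerD2l lerN2 /gain_const.
rewrite (_ : _ * dirichlet a = n^-1 * (n^-1 * (2%:R ^+ #|T|)^-1 * dirichlet a) / 2%:R);
  last by ring.
by rewrite ler_wpM2r ?invr_ge0 ?ler0n // ler_wpM2l ?invr_ge0 ?ler0n.
Qed.

End ExpectedDecrease.

Section Poincare.
Variables (R : archiRealFieldType) (T : finType) (e : rel T).

Lemma edge_le_dirichlet (a : T -> R) x y : e x y -> (a x - a y) ^+ 2 <= dirichlet e a.
Proof.
move=> exy; rewrite /dirichlet (bigD1 x) //= (bigD1 y) /=; last by rewrite inE.
rewrite -addrA lerDl addr_ge0 ?sumr_ge0 // => [t _|s _]; first exact: sqr_ge0.
by rewrite sumr_ge0 // => t _; exact: sqr_ge0.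
Qed.

(* Along a path of length k the end-to-end squared gap is at most 4^k times
   the Dirichlet energy, by (u - w)^2 <= 2 (u - v)^2 + 2 (v - w)^2. *)
Lemma path_le_dirichlet (a : T -> R) x q : path e x q ->
  (a x - a (last x q)) ^+ 2 <= 4%:R ^+ size q * dirichlet e a.
Proof.
have E0 := dirichlet_ge0 e a.
elim: q x => [|y q IH] x /=; first by rewrite subrr expr0n /= expr0 mul1r.
move=> /andP[exy hq]; have tail := IH y hq; have edge := edge_le_dirichlet a exy.
have K1 : 1 <= (4%:R : R) ^+ size q by rewrite exprn_ege1 // ler1n.
set u := a x in edge *; set v := a y in tail edge *; set w := a (last y q) in tail *.
set K := (4%:R : R) ^+ size q in K1 tail *; set E := dirichlet e a in E0 tail edge *.
have triangle : (u - w) ^+ 2 <= 2%:R * (u - v) ^+ 2 + 2%:R * (v - w) ^+ 2.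
  have := sqr_ge0 ((u - v) - (v - w)); nra.
have KE : 0 <= (K - 1) * E by rewrite mulr_ge0 // subr_ge0.
rewrite (exprS (4%:R : R)) -/K; nra.
Qed.

Definition poincare_const : R := #|T|%:R * 4%:R ^+ #|T|.

(* Poincare inequality on a connected graph: compare with the value at a fixed
   vertex v0 and join v0 to each vertex by a duplicate-free path. *)
Lemma poincare (a : T -> R) : (forall x y, connect e x y) -> (0 < #|T|)%N ->
  sqdist_to (avg a) a <= poincare_const * dirichlet e a.
Proof.
move=> conn T0; have /card_gt0P[v0 _] := T0.
apply: le_trans (sqdist_avg_min a (a v0) T0) _.
have -> : poincare_const * dirichlet e a = \sum_(u : T) 4%:R ^+ #|T| * dirichlet e a.
  by rewrite sumr_const /poincare_const -mulrA mulr_natl; congr (_ *+ _); apply: eq_card.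
apply: ler_sum => u _.
case/connectP: (conn v0 u) => q hq ->.
have [q' hq' uq _] := shortenP hq.
rewrite -sqrrN opprB; apply: le_trans (path_le_dirichlet a hq') _.
rewrite ler_wpM2r ?dirichlet_ge0 // ler_weXn2l ?ler1n //.
move/card_uniqP: uq => uq.
by have := max_card (mem (v0 :: q')); rewrite uq /= => /ltnW.
Qed.

End Poincare.

Section Contraction.
Variables (R : archiRealFieldType) (T : finType) (e : rel T) (p : R).
Hypotheses (hp0 : 0 <= p) (hp1 : p <= 1).
Hypothesis e_conn : forall x y : T, connect e x y.
Hypothesis deg_gt0 : forall s, (0 < #|nbrs e s|)%N.
Hypothesis T_nonempty : (0 < #|T|)%N.

Definition sgg_rate : R := gain_const R T / poincare_const R T.

Lemma sgg_rate_gt0 : 0 < sgg_rate.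
Proof.
by rewrite /sgg_rate /gain_const /poincare_const
  !(mulr_gt0, divr_gt0, invr_gt0, exprn_gt0, ltr0n).
Qed.

Lemma sgg_rate_le1 : sgg_rate <= 1.
Proof.
have unit_inv (x : R) : 1 <= x -> 0 <= x^-1 <= 1.
  move=> x1; have x0 : 0 < x := lt_le_trans ltr01 x1.
  by rewrite invr_ge0 ltW //= invf_le1.
have two1 : (1 : R) <= 2%:R by rewrite ler1n.
have /andP[n0 n1] : 0 <= (#|T|%:R : R)^-1 <= 1 by rewrite unit_inv ?ler1n.
have /andP[t0 t1] := unit_inv _ two1.
have /andP[tN0 tN1] := unit_inv _ (exprn_ege1 #|T| two1).
have P_ge1 : 1 <= poincare_const R T.
  by apply: mulr_ege1; rewrite ?exprn_ege1 ?ler1n.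
have /andP[Pi0 Pi1] := unit_inv _ P_ge1.
rewrite /sgg_rate /gain_const.
by repeat first [apply: mulr_ile1 | apply: mulr_ge0 | assumption].
Qed.

(* Combining the expected decrease with the Poincare inequality: around the
   (invariant) average, one SGG step contracts the expected energy. *)
Lemma sgg_step_contract (choose : (T -> R) -> T -> {set T} -> T) (c : R) a :
  greedy_choice e choose -> avg a = c ->
  sgg_step e p choose (sqdist_to c) a <= (1 - sgg_rate) * sqdist_to c a.
Proof.
move=> hchoose avg_a.
apply: le_trans (sgg_step_decrease hp0 hp1 hchoose deg_gt0 T_nonempty c a) _.
have P0 : 0 < poincare_const R T by rewrite mulr_gt0 ?exprn_gt0 ?ltr0n.
have G0 : 0 <= gain_const R T.
  by rewrite /gain_const !(mulr_ge0, invr_ge0, exprn_ge0, ler0n).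
have V_le : sqdist_to c a / poincare_const R T <= dirichlet e a.
  by rewrite ler_pdivrMr // mulrC -avg_a; exact: poincare.
rewrite mulrBl mul1r lerD2l lerN2 /sgg_rate mulrAC -mulrA.
by rewrite ler_wpM2l.
Qed.

Variable tb : nat -> (T -> R) -> T -> {set T} -> T.
Hypothesis htb : forall l, greedy_choice e (tb l).

Lemma sgg_exp_bound (c : R) (l k : nat) a : avg a = c ->
  0 <= sgg_exp e p tb k l (sqdist_to c) a <= (1 - sgg_rate) ^+ l * sqdist_to c a.
Proof.
have rho0 : 0 <= 1 - sgg_rate by rewrite subr_ge0 sgg_rate_le1.
elim: l k a => [|l IH] k a avg_a /=.
  by rewrite expr0 mul1r lexx andbT sqdist_to_ge0.
have IHu s t := IH k.+1 (avg_update a s t) (etrans (avg_avg_update a s t) avg_a).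
apply/andP; split.
  by apply: sgg_step_ge0 => // s t; case/andP: (IHu s t).
apply: le_trans (_ : _ <= sgg_step e p (tb k.+1)
  (fun x => (1 - sgg_rate) ^+ l * sqdist_to c x) a) _.
  by apply: sgg_step_mono => // s t; case/andP: (IHu s t).
rewrite sgg_stepZ exprSr -mulrA ler_wpM2l ?exprn_ge0 //.
exact: sgg_step_contract.
Qed.

End Contraction.

(* Bernoulli's inequality (1 - g)^l (1 + l g) <= 1 makes a geometric sequence
   with ratio 1 - g in [0, 1) eventually smaller than any eps > 0. *)
Lemma geometric_vanish (R : archiRealFieldType) (g V eps : R) :
  0 < g -> g <= 1 -> 0 <= V -> 0 < eps ->
  exists L : nat, forall l : nat, (L <= l)%N -> (1 - g) ^+ l * V < eps.
Proof.
move=> g0 g1 V0 eps0.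
have bernoulli l : (1 - g) ^+ l * (1 + l%:R * g) <= 1.
  elim: l => [|l IH]; first by rewrite expr0 mul1r mul0r addr0.
  rewrite exprSr -mulrA; apply: le_trans IH; rewrite ler_wpM2l ?exprn_ge0 ?subr_ge0 //.
  have l0 : (0 : R) <= l%:R by rewrite ler0n.
  rewrite -natr1; nra.
have B0 : 0 <= V / (g * eps) by rewrite divr_ge0 // ltW // mulr_gt0.
exists (Num.bound (V / (g * eps))) => l Ll.
have lB : V / (g * eps) < l%:R.
  by apply: lt_le_trans (archi_boundP B0) _; rewrite ler_nat.
have V_lt : V < l%:R * g * eps by rewrite -mulrA -ltr_pdivrMr // mulr_gt0.
set r := (1 - g) ^+ l; set y := l%:R * g in V_lt *.
have y0 : 0 <= y by rewrite mulr_ge0 ?ler0n // ltW.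
have shrink : r * V * (1 + y) <= V.
  by rewrite mulrAC -[leRHS]mul1r ler_wpM2r //; exact: bernoulli.
have grow : V < eps * (1 + y) by rewrite mulrDr mulr1 mulrC; lra.
by rewrite -(ltr_pM2r (_ : 0 < 1 + y)) ?(le_lt_trans shrink grow) //; lra.
Qed.

(* On a connected graph with at least two vertices every vertex has a
   neighbour: follow a path to any other vertex. *)
Lemma nbrs_nonempty (T : finType) (e : rel T) :
  (forall x y, connect e x y) -> (1 < #|T|)%N -> forall s, (0 < #|nbrs e s|)%N.
Proof.
move=> e_conn hN s.
have /card_gt0P[y] : (0 < #|[set~ s]|)%N by rewrite cardsC1 -subn1 subn_gt0.
rewrite !inE => ys.
case/connectP: (e_conn s y) => [[|z q]] /= => [_ ys_eq|/andP[esz _] _].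
  by rewrite ys_eq eqxx in ys.
by apply/card_gt0P; exists z; rewrite inE.
Qed.

Theorem theorem1 (R : archiRealFieldType) (T : finType) (e : rel T)
  (e_sym : symmetric e) (e_irr : irreflexive e)
  (e_conn : forall x y : T, connect e x y)
  (hN : (1 < #|T|)%N)
  (a0 : T -> R) (p : R) (hp0 : 0 <= p) (hp1 : p <= 1)
  (tb : nat -> (T -> R) -> T -> {set T} -> T)
  (htb : forall l, greedy_choice e (tb l)) :
  forall eps : R, 0 < eps -> exists L : nat, forall l : nat, (L <= l)%N ->
    `| sgg_exp e p tb 0 l (sqdist_to (avg a0)) a0 | < eps.
Proof.
move=> eps eps0.
have T0 : (0 < #|T|)%N := ltnW hN.
have deg := nbrs_nonempty e_conn hN.
have [L small] := geometric_vanish (sgg_rate_gt0 R T0) (sgg_rate_le1 R T0)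
  (sqdist_to_ge0 (avg a0) a0) eps0.
exists L => l Ll.
case/andP: (sgg_exp_bound hp0 hp1 e_conn deg T0 htb l 0 (erefl (avg a0))) => exp_ge0 exp_le.
by rewrite ger0_norm //; apply: le_lt_trans exp_le (small l Ll).
Qed.
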